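(* Consider the Probabilistic Serial mechanism with $n$ agents and $m \le n$ items. Agent 1 has a strict linear order $\succ_1$ over the items; let $\overline{O}$ be the set of its $k$ most preferred items under $\succ_1$ ($1 \le k \le m$). Fix arbitrary reported strict linear orders of agents $2,\dots,n$, and consider the truthful run in which agent 1 reports $\succ_1$. Let $T$ be the time at which the last item of $\overline{O}$ is exhausted in this run, and suppose $\tfrac12 \le T < \tfrac23$. Suppose there is an item $o^* \in \overline{O}$ of which agent 1 receives a positive amount such that, at the moment $o^*$ is exhausted, the agents eating $o^*$ are exactly agent 1 and one other agent (agent 2). Let $t_1$ be the time at which agent 1 starts eating $o^*$, let $t_2$ be the length of time agent 1 spends eating $o^*$ (so $o^*$ is exhausted at time $t_1+t_2$), and let $t_3 = T - t_1 - t_2$. Then $$t_1 + t_2 \ge \tfrac12,\quad t_3 < \tfrac16,\quad t_1 < \tfrac13,\quad t_2 > 2t_3.$$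
   Context: Probabilistic Serial: there are $n$ agents and $m$ divisible items of unit supply; each agent reports a strict linear order over all items. Starting at time $0$, every agent consumes at rate $1$ per unit time its most preferred item (according to its report) among those with positive remaining supply; when an item is exhausted, agents consuming it move to their most preferred item still available; this continues until all items are exhausted. *)

(* Probabilistic Serial (eating) mechanism as a discrete
   sequence of phases over an ordered field R. *)
From HB Require Import structures.
From mathcomp Require Import all_boot all_order all_algebra perm.
Set Implicit Arguments. Unset Strict Implicit. Unset Printing Implicit Defensive.
Import Order.TTheory GRing.Theory Num.Theory.
Local Open Scope ring_scope.

Section PS.
Variables (R : realFieldType) (n m : nat).
(* A preference profile: [pref i] is the ranking of agent i: [pref i o] is the
   position of item o in agent i's strict linear order (0 = most preferred);
   agent i prefers o to o' iff (pref i o < pref i o')%N. *)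
Variable pref : 'I_n -> {perm 'I_m}.

Definition state := {ffun 'I_m -> R}.

Definition avail (s : state) (o : 'I_m) : bool := 0 < s o.

Definition top (s : state) (i : 'I_n) : option 'I_m :=
  [pick o | avail s o &
     [forall o' : 'I_m, avail s o' ==> (pref i o <= pref i o')%N]].

Definition eaters (s : state) (o : 'I_m) : {set 'I_n} :=
  [set i | top s i == Some o].

Definition rate (s : state) (o : 'I_m) : R := (#|eaters s o|)%:R.

(* Length of the current phase: time until the next item is exhausted. *)
Definition dt (s : state) : R :=
  match [pick o | [&& avail s o, (0 < #|eaters s o|)%N &
           [forall o' : 'I_m, (avail s o' && (0 < #|eaters s o'|)%N) ==>
                 (s o / rate s o <= s o' / rate s o')]]] with
  | Some o => s o / rate s o
  | None => 0
  end.

Definition next (s : state) : state := [ffun o => s o - rate s o * dt s].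

Definition init : state := [ffun => 1].

(* Supply state at the start of phase j (all items exhausted after m phases). *)
Definition phase (j : nat) : state := iter j next init.

Definition exhaust_time (o : 'I_m) : R :=
  \sum_(j < m) (if avail (phase j) o then dt (phase j) else 0).

(* Amount of item o received by agent i = time agent i spends eating o. *)
Definition share (i : 'I_n) (o : 'I_m) : R :=
  \sum_(j < m) (if top (phase j) i == Some o then dt (phase j) else 0).

Definition start_time (i : 'I_n) (o : 'I_m) : R :=
  \sum_(j < m | [forall j' : 'I_m, (j' <= j)%N ==> (top (phase j') i != Some o)])
     dt (phase j).

Definition top_k (i : 'I_n) (k : nat) : {set 'I_m} :=
  [set o | (pref i o < k)%N].

Definition last_exhaust (O : {set 'I_m}) : R :=
  \big[Num.max/0]_(o in O) exhaust_time o.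

Definition eaters_at_exhaustion (o : 'I_m) (S : {set 'I_n}) : Prop :=
  exists j : nat, [/\ avail (phase j) o, ~~ avail (phase j.+1) o &
                      eaters (phase j) o = S].
End PS.

From Pilot Require Import Defs.
From HB Require Import structures.
From mathcomp Require Import all_boot all_order all_algebra perm.
From mathcomp Require Import zify lra.
Import Order.TTheory GRing.Theory Num.Theory.
Set Implicit Arguments. Unset Strict Implicit.
Local Open Scope ring_scope.

(* Agent 1 eats o* without interruption from time t1 until o* is exhausted,
   so o* is exhausted at E = t1 + t2 <= T.  While an item is available its
   eaters only join and never leave, so o* is always eaten by a subset of
   {1, 2}: at rate at most 2, and at rate at most 1 while agent 1 is not on
   it.  Eating up the unit supply of o* thus forces 1 <= E + t2 <= 2 E, and
   the four inequalities follow from E <= T < 2/3 by linear arithmetic. *)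

Section EatingDynamics.
Variables (R : realFieldType) (n m : nat) (pref : 'I_n -> {perm 'I_m}).
Local Notation state := (state R m).
Local Notation phase := (phase R pref).
Local Notation top := (top pref).
Local Notation eaters := (eaters pref).
Local Notation rate := (rate pref).
Local Notation dt := (dt pref).
Local Notation next := (Defs.next pref).

Lemma top_avail (s : state) i o : top s i = Some o -> avail s o.
Proof. by rewrite /top; case: pickP => // x /andP[Ha _] [<-]. Qed.

Lemma eaters_unavail (s : state) o : ~~ avail s o -> eaters s o = set0.
Proof.
move=> Hn; apply/setP=> i; rewrite !inE; apply/negP=> /eqP /top_avail Ha.
by rewrite Ha in Hn.
Qed.

Lemma rate_unavail (s : state) o : ~~ avail s o -> rate s o = 0.
Proof. by move=> Hn; rewrite /rate eaters_unavail // cards0. Qed.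

Lemma nextE (s : state) o : next s o = s o - rate s o * dt s.
Proof. by rewrite ffunE. Qed.

Lemma next_unavail (s : state) o : ~~ avail s o -> ~~ avail (next s) o.
Proof. by move=> Hn; rewrite /avail nextE rate_unavail // mul0r subr0. Qed.

Lemma unavail_phase_le j j' o :
  (j <= j')%N -> ~~ avail (phase j) o -> ~~ avail (phase j') o.
Proof.
move=> /subnK <-; elim: (j' - j)%N => [|d IH] //= Hn.
exact: next_unavail (IH Hn).
Qed.

Lemma avail_phase_ge j j' o :
  (j <= j')%N -> avail (phase j') o -> avail (phase j) o.
Proof. by move=> Hle; apply: contraLR; apply: unavail_phase_le. Qed.

Lemma top_next (s : state) i o :
  top s i = Some o -> avail (next s) o -> top (next s) i = Some o.
Proof.
move=> Ht Han.
have avail_prev o' : avail (next s) o' -> avail s o'.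
  by apply: contraLR; apply: next_unavail.
move: Ht; rewrite /top; case: pickP => // x /andP[_ /forallP best_o] [Exo].
subst x; case: pickP => [y /andP[Hay /forallP best_y]|].
- congr Some; apply/(perm_inj (s := pref i))/val_inj/eqP.
  rewrite /= eqn_leq (implyP (best_y o) Han).
  exact: implyP (best_o y) (avail_prev y Hay).
- move=> /(_ o); rewrite Han /= => /negbT/forallPn [o'].
  rewrite negb_imply => /andP[Ha' Hlt].
  by rewrite (implyP (best_o o') (avail_prev o' Ha')) in Hlt.
Qed.

Lemma top_persists j j' i o : (j <= j')%N ->
  top (phase j) i = Some o -> avail (phase j') o -> top (phase j') i = Some o.
Proof.
move=> /subnK <-; elim: (j' - j)%N => [|d IH] //= Ht Ha.
exact: top_next (IH Ht (avail_phase_ge (leqnSn _) Ha)) Ha.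
Qed.

Lemma eaters_persist j j' o : (j <= j')%N -> avail (phase j') o ->
  eaters (phase j) o \subset eaters (phase j') o.
Proof.
move=> Hle Ha; apply/subsetP => i; rewrite !inE => /eqP Ht.
by rewrite (top_persists Hle Ht Ha).
Qed.

Lemma eaters_sub_exhaustion o S : eaters_at_exhaustion R pref o S ->
  forall j, avail (phase j) o -> eaters (phase j) o \subset S.
Proof.
move=> [J [HaJ HnJ <-]] j Ha; apply: eaters_persist HaJ.
by rewrite leqNgt; apply: contraL Ha => /unavail_phase_le; apply.
Qed.

Lemma top_some (s : state) i o : avail s o -> exists o', top s i = Some o'.
Proof.
rewrite /top; case: pickP => [x _|none] Ha; first by exists x.
have [x Hx best_x] := arg_minnP (fun o => nat_of_ord (pref i o)) Ha.
move: (none x); rewrite Hx /= => /negbT/forallPn [o'].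
by rewrite negb_imply => /andP[/best_x ->].
Qed.

Lemma dt_ge0 (s : state) : 0 <= dt s.
Proof.
rewrite /dt; case: pickP => // o /and3P[Ha _ _].
by apply: divr_ge0; [exact: ltW | exact: ler0n].
Qed.

(* The phase ends when the first eaten item runs out; the agent [i0] ensures
   that some available item is eaten at all (for [n = 0], [dt] is [0]). *)
Lemma next_exhausts (i0 : 'I_n) (s : state) o0 : avail s o0 ->
  exists o, avail s o && ~~ avail (next s) o.
Proof.
move=> Ha0; have [o1 Ht1] := top_some i0 Ha0.
have eaten1 : avail s o1 && (0 < #|eaters s o1|)%N.
  rewrite (top_avail Ht1) /=; apply/card_gt0P; exists i0; by rewrite inE Ht1.
suff [o [Ha Hz]] : exists o, avail s o /\ rate s o * dt s = s o.
  by exists o; rewrite Ha /avail nextE Hz subrr ltxx.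
rewrite /dt; case: pickP => [o /and3P[Ha He _]|none].
  by exists o; split => //; rewrite mulrC divfK // /rate pnatr_eq0 -lt0n.
have [x Hx best_x] := @arg_minP _ _ _ o1
  (fun o => avail s o && (0 < #|eaters s o|)%N)
  (fun o => s o / rate s o) eaten1.
move: (none x); case/andP: Hx => -> -> /= /negbT/forallPn [o'].
by rewrite negb_imply => /andP[/best_x ->].
Qed.

Lemma card_avail_phase (i0 : 'I_n) j :
  (#|[set o | avail (phase j) o]| <= m - j)%N.
Proof.
elim: j => [|j IH]; first by rewrite subn0 -[m in (_ <= m)%N]card_ord max_card.
have [->|] := posnP #|[set o | avail (phase j.+1) o]|; first by [].
move=> /card_gt0P [o0]; rewrite inE => /(avail_phase_ge (leqnSn j)) Ha0.
have [o /andP[Ha Hn]] := next_exhausts i0 Ha0.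
have shrink :
    [set o | avail (phase j.+1) o] \proper [set o | avail (phase j) o].
  apply/properP; split; last by exists o; rewrite !inE.
  by apply/subsetP => o'; rewrite !inE; apply: avail_phase_ge.
by move: (proper_card shrink) IH; lia.
Qed.

Lemma phase_exhausted (i0 : 'I_n) o : ~~ avail (phase m) o.
Proof.
apply/negP => Ha; have := card_avail_phase i0 m.
by rewrite subnn leqn0 cards_eq0 => /eqP/setP/(_ o); rewrite !inE Ha.
Qed.

Definition consumed (N : nat) (o : 'I_m) : R :=
  \sum_(j < N) rate (phase j) o * dt (phase j).

Lemma phase_consumed N o : phase N o = 1 - consumed N o.
Proof.
elim: N => [|N IH]; first by rewrite /consumed big_ord0 subr0 ffunE.
by rewrite /consumed big_ord_recr /= nextE IH opprD addrA.
Qed.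

Lemma consumed_ge1 (i0 : 'I_n) o : 1 <= consumed m o.
Proof.
by have := phase_exhausted i0 o; rewrite /avail -leNgt phase_consumed subr_le0.
Qed.

Lemma share_gt0_top i o : 0 < share R pref i o ->
  exists j : 'I_m, top (phase j) i = Some o.
Proof.
case: (pickP (fun j : 'I_m => top (phase j) i == Some o)) => [j /eqP|none].
  by exists j.
by rewrite /share big1 ?ltxx // => j _; rewrite none.
Qed.

Lemma start_time_ge0 i o : 0 <= start_time R pref i o.
Proof. by apply: sumr_ge0 => j _; exact: dt_ge0. Qed.

(* Before [start_time] agent [i] is not on [o] yet, afterwards it stays on [o]
   until [o] is exhausted; so every phase in which [o] is available is counted
   in exactly one of the two sums. *)
Lemma exhaust_time_split i o (j0 : 'I_m) : top (phase j0) i = Some o ->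
  exhaust_time R pref o = start_time R pref i o + share R pref i o.
Proof.
move=> Ht0; rewrite /start_time big_mkcond -big_split /=; apply: eq_bigr => j _.
set before := [forall j' : 'I_m, _].
have [Ht|Hnt] := eqVneq (top (phase j) i) (Some o).
  have -> : before = false.
    by apply/negbTE/forallPn; exists j; rewrite leqnn Ht eqxx.
  by rewrite (top_avail Ht) add0r.
case: (boolP before) => [/forallP Hb|/forallPn [j' Hj']]; rewrite addr0.
  suff Hle : (j <= j0)%N by rewrite (avail_phase_ge Hle (top_avail Ht0)).
  by rewrite leqNgt; apply/negP => /ltnW /(implyP (Hb j0)); rewrite Ht0 eqxx.
case: ifP => // Ha; move: Hj'; rewrite negb_imply negbK => /andP[Hle /eqP Ht'].
by rewrite (top_persists Hle Ht' Ha) eqxx in Hnt.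
Qed.

Lemma rate_le_setD1 (s : state) o (S : {set 'I_n}) i :
  eaters s o \subset S ->
  rate s o <= #|S :\ i|%:R + (top s i == Some o)%:R.
Proof.
move=> Hsub; rewrite /rate (cardsD1 i) inE addnC natrD lerD2r ler_nat.
exact/subset_leq_card/setSD.
Qed.

Lemma consumed_le_share o (S : {set 'I_n}) i :
  (forall j, avail (phase j) o -> eaters (phase j) o \subset S) ->
  consumed m o <= #|S :\ i|%:R * exhaust_time R pref o + share R pref i o.
Proof.
move=> Hsub; rewrite /consumed /exhaust_time /share mulr_sumr -big_split.
apply: ler_sum => j _; have dt0 := dt_ge0 (phase j).
case: (boolP (avail (phase j) o)) => Ha.
  have := rate_le_setD1 i (Hsub j Ha).
  by case: eqP => _ /= Hr; nra.
rewrite /= rate_unavail // mul0r mulr0 add0r.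
by case: eqP => // Ht; rewrite (top_avail Ht) in Ha.
Qed.

End EatingDynamics.

Theorem lemma3 (R : realFieldType) (n m : nat) (pref : 'I_n -> {perm 'I_m})
  (a1 a2 : 'I_n) (k : nat) (ostar : 'I_m) :
  (m <= n)%N -> (1 <= k <= m)%N ->
  let Obar := top_k pref a1 k in
  let T := last_exhaust R pref Obar in
  1 / 2 <= T -> T < 2 / 3 ->
  ostar \in Obar ->
  0 < share R pref a1 ostar ->
  a2 != a1 ->
  eaters_at_exhaustion R pref ostar [set a1; a2] ->
  let t1 := start_time R pref a1 ostar in
  let t2 := share R pref a1 ostar in
  let t3 := T - t1 - t2 in
  [/\ 1 / 2 <= t1 + t2, t3 < 1 / 6, t1 < 1 / 3 & 2 * t3 < t2].
Proof.
move=> _ _ Obar T _ T_lt in_Obar share_gt0 a21 exhaustion t1 t2 t3.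
set E := exhaust_time R pref ostar.
have [j0 eats0] := share_gt0_top share_gt0.
have E_split : E = t1 + t2 := exhaust_time_split eats0.
have E_le_T : E <= T by apply: le_bigmax_cond.
have other_eater : #|[set a1; a2] :\ a1| = 1%N.
  by rewrite setU1K ?cards1 // inE eq_sym.
have supply : 1 <= E + t2.
  apply: le_trans (consumed_ge1 R pref a1 ostar) _.
  have := consumed_le_share a1 (eaters_sub_exhaustion exhaustion).
  by rewrite other_eater mul1r.
have t1_ge0 : 0 <= t1 := start_time_ge0 R pref a1 ostar.
rewrite /t3; split; lra.
Qed.
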